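(* Let $G=(V,E)$ be a finite graph, $\varepsilon$ an orientation, $q$ a positive integer, and let $\rho,\sigma,\omega$ be Eulerian equivalent totally cyclic orientations of $G$. Let $f\in q\Delta^\rho_{\mathrm{FL}}(G,\varepsilon)$. Then: (a) $\varepsilon_f=\rho$; (b) $P_{\varepsilon,\sigma}Q_{\sigma,\rho}P_{\rho,\varepsilon}\big(q\Delta^\rho_{\mathrm{FL}}(G,\varepsilon)\big)=q\Delta^\sigma_{\mathrm{FL}}(G,\varepsilon)$; (c) $P_{\varepsilon,\sigma}Q_{\sigma,\rho}P_{\rho,\varepsilon}f=P_{\varepsilon,\omega}Q_{\omega,\rho}P_{\rho,\varepsilon}f$ if and only if $\sigma=\omega$; (d) $F(G,\varepsilon;q)\cap\mathrm{Mod}_q^{-1}(\mathrm{Mod}_qf)=\{P_{\varepsilon,\alpha}Q_{\alpha,\rho}P_{\rho,\varepsilon}f:\ \alpha\in\mathcal O(G),\ \alpha\sim\rho\}$.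
   Context: An orientation assigns each edge (including loops) one of its two directions; $\varepsilon(v,e)=1$ ($-1$) if non-loop $e$ points out of (into) end-vertex $v$, $0$ otherwise. $F(G,\varepsilon;\mathbb R)$: real flows $f:E\to\mathbb R$ with $\sum_e m_{v,e}f(e)=0$ for all $v$, $m_{v,e}=\varepsilon(v,e)$ for non-loops, $0$ for loops; $F(G,\varepsilon;q)=\{f\in F(G,\varepsilon;\mathbb R):|f(e)|<q\ \forall e\}$. $[\rho,\varepsilon](e)=1$ if $\rho,\varepsilon$ give $e$ the same direction, $-1$ otherwise; $P_{\rho,\varepsilon}:\mathbb R^E\to\mathbb R^E$, $P_{\rho,\varepsilon}f=[\rho,\varepsilon]f$. $Q_{\sigma,\rho}:[0,q]^E\to[0,q]^E$, $(Q_{\sigma,\rho}g)(e)=g(e)$ if $\sigma,\rho$ agree on $e$ and $q-g(e)$ otherwise. $q\Delta^\rho_{\mathrm{FL}}(G,\varepsilon)=\{f\in F(G,\varepsilon;\mathbb R):0<[\rho,\varepsilon](e)f(e)<q\ \forall e\}$. For $f:E\to\mathbb R$, $\varepsilon_f$ agrees with $\varepsilon$ on edges with $f(e)>0$ and is opposite on edges with $f(e)\le0$. $\mathrm{Mod}_q:\mathbb R^E\to(\mathbb R/q\mathbb Z)^E$ reduces each coordinate mod $q$. Orientations are Eulerian equivalent ($\sim$) if the spanning subgraph formed by the edges on which they differ is directed Eulerian (in-degree = out-degree at every vertex) with respect to either of them. A cut $[S,S^c]$ (nonempty set of all edges between a nonempty proper vertex set and its complement) is directed if all its edges point the same way across it;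 totally cyclic means no directed cut. *)

From HB Require Import structures.
From mathcomp Require Import all_boot all_order all_algebra.
From mathcomp Require Import reals.
Set Implicit Arguments. Unset Strict Implicit. Unset Printing Implicit Defensive.
Import Order.TTheory GRing.Theory Num.Theory.
Local Open Scope ring_scope.

(* A finite graph (loops and multiple edges allowed) is given by finite types
   V (vertices) and E (edges) and two end maps [t h : E -> V]; the pair
   (t e, h e) fixes a reference direction "t e -> h e" of e.  An orientation
   is a map [o : E -> bool]: [o e = true] means e is directed t e -> h e,
   [o e = false] means h e -> t e.  (For a loop both values are the two
   formal directions of the loop.) *)

Definition otail (V E : finType) (t h : E -> V) (o : E -> bool) (e : E) : V :=
  if o e then t e else h e.
Definition ohead (V E : finType) (t h : E -> V) (o : E -> bool) (e : E) : V :=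
  if o e then h e else t e.

Definition inc (R : realType) (V E : finType) (t h : E -> V) (o : E -> bool)
    (v : V) (e : E) : R :=
  if t e == h e then 0
  else if otail t h o e == v then 1
  else if ohead t h o e == v then -1 else 0.

Definition is_flow (R : realType) (V E : finType) (t h : E -> V)
    (eps : E -> bool) (f : E -> R) : Prop :=
  forall v : V, \sum_(e : E) inc R t h eps v e * f e = 0.

Definition qflow (R : realType) (V E : finType) (t h : E -> V)
    (eps : E -> bool) (q : nat) (f : E -> R) : Prop :=
  is_flow t h eps f /\ forall e, `|f e| < q%:R.

Definition osign (R : realType) (E : finType) (rho eps : E -> bool) (e : E) : R :=
  if rho e == eps e then 1 else -1.

Definition Pmap (R : realType) (E : finType) (rho eps : E -> bool)
    (f : E -> R) : E -> R :=
  fun e => osign R rho eps e * f e.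

(* Q_{sigma,rho} (only ever applied to functions with values in [0,q]) *)
Definition Qmap (R : realType) (E : finType) (q : nat) (sigma rho : E -> bool)
    (g : E -> R) : E -> R :=
  fun e => if sigma e == rho e then g e else q%:R - g e.

Definition DeltaFL (R : realType) (V E : finType) (t h : E -> V)
    (q : nat) (rho eps : E -> bool) (f : E -> R) : Prop :=
  is_flow t h eps f /\
  forall e, 0 < osign R rho eps e * f e /\ osign R rho eps e * f e < q%:R.

Definition orient_of (R : realType) (E : finType) (eps : E -> bool)
    (f : E -> R) : E -> bool :=
  fun e => if 0 < f e then eps e else ~~ eps e.

(* Mod_q g = Mod_q f in (R/qZ)^E, i.e. coordinatewise congruence mod qZ *)
Definition modq_eq (R : realType) (E : finType) (q : nat) (f g : E -> R) : Prop :=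
  forall e, exists k : int, g e - f e = k%:~R * q%:R.

Definition eulerian_equiv (V E : finType) (t h : E -> V) (o1 o2 : E -> bool) : Prop :=
  forall v : V,
    #|[set e : E | (o1 e != o2 e) && (otail t h o1 e == v)]| =
    #|[set e : E | (o1 e != o2 e) && (ohead t h o1 e == v)]|.

Definition in_cut (V E : finType) (t h : E -> V) (S : {set V}) (e : E) : bool :=
  (t e \in S) != (h e \in S).

Definition directed_cut (V E : finType) (t h : E -> V) (o : E -> bool)
    (S : {set V}) : Prop :=
  [/\ S != set0, S != setT, (exists e, in_cut t h S e) &
      ((forall e, in_cut t h S e -> otail t h o e \in S) \/
       (forall e, in_cut t h S e -> otail t h o e \notin S))].

Definition totally_cyclic (V E : finType) (t h : E -> V) (o : E -> bool) : Prop :=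
  ~ exists S : {set V}, directed_cut t h o S.

From Pilot Require Import Defs.
From HB Require Import structures.
From mathcomp Require Import all_boot all_order all_algebra.
From mathcomp Require Import reals ring lra zify.
From Stdlib Require Import FunctionalExtensionality.
Set Implicit Arguments. Unset Strict Implicit. Unset Printing Implicit Defensive.
Import Order.TTheory GRing.Theory Num.Theory.
Local Open Scope ring_scope.

(* The composite T = P_{eps,a} Q_{a,b} P_{b,eps} is a translation
   f |-> f + c_{a,b}, where c_{a,b} is q times the signed indicator of the
   edges on which a and b differ.  The translation vector c_{a,b} is a flow
   exactly when a ~ b (its divergence at v is q (outdeg - indeg) of the
   difference subgraph), and Q_{a,b} preserves the open box (0,q)^E, so T
   maps q Delta^b_FL onto q Delta^a_FL, with inverse T_{b,a}.  Conversely a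
   flow in the box (-q,q)^E congruent to f mod q differs from f on each edge
   by 0 or by -q [rho,eps](e), i.e. it is T_{alpha,rho} f for the
   orientation alpha obtained by reversing rho on the edges where it differs. *)

Section Transfer.
Variables (R : realType) (V E : finType) (t h : E -> V).

Definition transfer (q : nat) (eps a b : E -> bool) (f : E -> R) : E -> R :=
  Pmap eps a (Qmap q a b (Pmap b eps f)).

Definition shift (q : nat) (a b eps : E -> bool) (e : E) : R :=
  if a e != b e then osign R a eps e * q%:R else 0.

Lemma transferE q eps a b f e : transfer q eps a b f e = f e + shift q a b eps e.
Proof.
rewrite /transfer /Pmap /Qmap /shift /osign.
by case: (a e); case: (b e); case: (eps e) => /=; ring.
Qed.

Lemma transferK q eps a b f : transfer q eps b a (transfer q eps a b f) = f.
Proof.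
apply: functional_extensionality => e; rewrite !transferE /shift /osign.
by case: (a e); case: (b e); case: (eps e) => /=; ring.
Qed.

Lemma shift_modq q a b eps e : exists k : int, shift q a b eps e = k%:~R * q%:R.
Proof.
exists (if a e != b e then (if a e == eps e then 1 else -1) else 0).
by rewrite /shift /osign; case: (a e != b e); case: (a e == eps e);
  rewrite ?mulr0z ?mulr1z ?mulrN1z ?mul0r.
Qed.

Lemma normr_Pmap a b (f : E -> R) e : `|Pmap a b f e| = `|f e|.
Proof. by rewrite /Pmap /osign; case: ifP; rewrite ?mul1r ?mulN1r ?normrN. Qed.

Lemma PmapK a b (f : E -> R) : Pmap a b (Pmap b a f) = f.
Proof.
apply: functional_extensionality => e; rewrite /Pmap /osign eq_sym.
by case: ifP; rewrite ?mul1r // !mulN1r opprK.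
Qed.

Lemma Qmap_in_box q a b (g : E -> R) e :
  0 < g e /\ g e < q%:R -> 0 < Qmap q a b g e /\ Qmap q a b g e < q%:R.
Proof. by rewrite /Qmap; case: ifP => // _ [g0 gq]; split; lra. Qed.

Lemma inc_mul_osign a b v e : inc R t h b v e * osign R a b e = inc R t h a v e.
Proof.
rewrite /inc /otail /Defs.ohead /osign.
case: (t e =P h e) => [_|htne]; first by rewrite mul0r.
case: (a e); case: (b e) => /=; rewrite ?mulr1 ?mulrN1;
case: (t e =P v) => tv; case: (h e =P v) => hv; rewrite /= ?opprK ?oppr0 //;
by case: htne; rewrite tv hv.
Qed.

Lemma sum_inc_differ a b v :
  \sum_(e | a e != b e) inc R t h a v e =
  #|[set e | (a e != b e) && (otail t h a e == v)]|%:R -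
  #|[set e | (a e != b e) && (Defs.ohead t h a e == v)]|%:R.
Proof.
rewrite -!sum1_card !natr_sum big_mkcond [X in _ = X - _]big_mkcond.
rewrite [X in _ = _ - X]big_mkcond -sumrB; apply: eq_bigr => e _; rewrite !inE.
rewrite /inc /otail /Defs.ohead; case: (a e != b e); rewrite /= ?subrr //.
case: (t e =P h e) => [->|htne]; first by case: (a e); rewrite subrr.
case: (a e) => /=; case: (t e =P v) => tv; case: (h e =P v) => hv;
  rewrite /= ?subr0 ?sub0r //; by case: htne; rewrite tv hv.
Qed.

Lemma eulerian_equiv_sum a b :
  eulerian_equiv t h a b <-> forall v, \sum_(e | a e != b e) inc R t h a v e = 0.
Proof.
split=> Heul v; move: (Heul v); rewrite sum_inc_differ; first by move->; rewrite subrr.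
by move/eqP; rewrite subr_eq0 eqr_nat => /eqP.
Qed.

Lemma eulerian_equiv_sym a b : eulerian_equiv t h a b -> eulerian_equiv t h b a.
Proof.
move=> Heul v.
have -> : [set e | (b e != a e) && (otail t h b e == v)] =
          [set e | (a e != b e) && (Defs.ohead t h a e == v)].
  by apply/setP => e; rewrite !inE /otail /Defs.ohead; case: (a e); case: (b e).
have -> : [set e | (b e != a e) && (Defs.ohead t h b e == v)] =
          [set e | (a e != b e) && (otail t h a e == v)].
  by apply/setP => e; rewrite !inE /otail /Defs.ohead; case: (a e); case: (b e).
by rewrite Heul.
Qed.

Lemma is_flowD eps (f g : E -> R) :
  is_flow t h eps f -> is_flow t h eps g -> is_flow t h eps (fun e => f e + g e).
Proof.
by move=> Hf Hg v; under eq_bigr do rewrite mulrDr; rewrite big_split /= Hf Hg addr0.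
Qed.

Lemma is_flowB eps (f g : E -> R) :
  is_flow t h eps f -> is_flow t h eps g -> is_flow t h eps (fun e => f e - g e).
Proof.
by move=> Hf Hg v; under eq_bigr do rewrite mulrBr; rewrite sumrB Hf Hg subrr.
Qed.

Lemma is_flow_shift q a b eps :
  (0 < q)%N -> is_flow t h eps (shift q a b eps) <-> eulerian_equiv t h a b.
Proof.
move=> q_gt0.
have divE v : \sum_e inc R t h eps v e * shift q a b eps e =
              (\sum_(e | a e != b e) inc R t h a v e) * q%:R.
  rewrite (big_mkcond (fun e => a e != b e)) mulr_suml; apply: eq_bigr => e _; rewrite /shift.
  by case: ifP => _; rewrite ?mulr0 ?mul0r // mulrA inc_mul_osign.
rewrite (eulerian_equiv_sum a b); split=> Hv v; move: (Hv v); rewrite divE.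
  by move/eqP; rewrite mulf_eq0 pnatr_eq0 eqn0Ngt q_gt0 orbF => /eqP.
by move->; rewrite mul0r.
Qed.

Lemma is_flow_transfer q eps a b f :
  (0 < q)%N -> is_flow t h eps f ->
  is_flow t h eps (transfer q eps a b f) <-> eulerian_equiv t h a b.
Proof.
move=> q_gt0 Hf; rewrite -(is_flow_shift a b eps q_gt0).
have -> : transfer q eps a b f = (fun e => f e + shift q a b eps e).
  by apply: functional_extensionality => e; rewrite transferE.
split=> [Hg|]; last exact: is_flowD.
have -> : shift q a b eps = (fun e => (f e + shift q a b eps e) - f e).
  by apply: functional_extensionality => e; rewrite addrC addKr.
exact: is_flowB.
Qed.

Lemma DeltaFL_transfer q eps a b f :
  (0 < q)%N -> eulerian_equiv t h a b ->
  DeltaFL t h q b eps f -> DeltaFL t h q a eps (transfer q eps a b f).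
Proof.
move=> q_gt0 Heul [Hf Hbox]; split; first by apply/is_flow_transfer.
move=> e; have -> : osign R a eps e * transfer q eps a b f e = Qmap q a b (Pmap b eps f) e.
  by rewrite -[LHS]/(Pmap a eps (transfer q eps a b f) e) /transfer PmapK.
exact: Qmap_in_box (Hbox e).
Qed.

Lemma transfer_inj_orient q eps a c b (f : E -> R) :
  (0 < q)%N -> transfer q eps a b f = transfer q eps c b f -> a = c.
Proof.
move=> q_gt0 Heq; have q_pos : 0 < q%:R :> R by rewrite ltr0n.
apply: functional_extensionality => e.
move: (congr1 (fun g => g e) Heq); rewrite !transferE /shift /osign.
by case: (a e); case: (c e); case: (b e); case: (eps e) => //= /addrI; lra.
Qed.

Lemma orient_of_pos eps rho (f : E -> R) :
  (forall e, 0 < osign R rho eps e * f e) -> orient_of eps f = rho.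
Proof.
move=> Hpos; apply: functional_extensionality => e; move: (Hpos e).
rewrite /orient_of /osign; case: (rho e); case: (eps e) => /= Hf;
  case: ltrP => // Hf'; lra.
Qed.

Lemma modq_open_box (q : nat) (x y : R) (k : int) :
  0 < x -> x < q%:R -> `|y| < q%:R -> y - x = k%:~R * q%:R -> y = x \/ y = x - q%:R.
Proof.
move=> x_gt0 x_ltq; rewrite ltr_norml => /andP[y_gt y_lt] yxE.
have q_pos : 0 < q%:R :> R by lra.
have : k%:~R < 1%:~R :> R by rewrite -(ltr_pM2r q_pos); lra.
have : (-2)%:~R < k%:~R :> R by rewrite -(ltr_pM2r q_pos) mulrNz; lra.
rewrite !ltr_int => k_gtN2 k_lt1.
move: yxE; have [->|->] : k = 0 \/ k = -1 by lia.
  by rewrite mul0r => /eqP; rewrite subr_eq0 => /eqP; left.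
by rewrite mulN1r; right; lra.
Qed.

Lemma modq_eq_transfer q eps rho (f g : E -> R) :
  (forall e, 0 < osign R rho eps e * f e /\ osign R rho eps e * f e < q%:R) ->
  (forall e, `|g e| < q%:R) -> modq_eq q f g ->
  g = transfer q eps (fun e => if g e == f e then rho e else ~~ rho e) rho f.
Proof.
move=> Hbox Hg Hmod; apply: functional_extensionality => e.
rewrite transferE /shift /=; case: (g e =P f e) => [->|gfne]; first by rewrite eqxx addr0.
have [k gfE] := Hmod e.
suff gE : g e = f e - osign R rho eps e * q%:R.
  rewrite gE /osign (introF eqP gfne) /=.
  by case: (rho e); case: (eps e); rewrite /= ?mulN1r ?mul1r ?mulNr ?opprK.
move: (Hbox e) (Hg e) gfE; rewrite /osign; case: eqP => _; rewrite ?mul1r ?mulN1r.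
  by move=> [/modq_open_box H /H] /[apply]/[apply] -[].
move=> [/modq_open_box H /H {}H] gq gfE; case: (H (- g e) (- k)).
- by rewrite normrN.
- by rewrite mulrNz mulNr -gfE; ring.
- by move/oppr_inj.
- by move=> gE; lra.
Qed.

Lemma transfer_qflow_modq q eps a rho (f : E -> R) :
  (0 < q)%N -> eulerian_equiv t h a rho -> DeltaFL t h q rho eps f ->
  qflow t h eps q (transfer q eps a rho f) /\ modq_eq q f (transfer q eps a rho f).
Proof.
move=> q_gt0 Heul [Hf Hbox]; split; first split.
- exact/is_flow_transfer.
- move=> e; rewrite /transfer normr_Pmap.
  have [Q_gt0 Q_ltq] := @Qmap_in_box q a rho (Pmap rho eps f) e (Hbox e).
  by rewrite gtr0_norm.
- move=> e; have [k shiftE] := shift_modq q a rho eps e.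
  by exists k; rewrite transferE addrC addKr.
Qed.

End Transfer.

Theorem lemma5p4 (R : realType) (V E : finType) (t h : E -> V)
    (eps : E -> bool) (q : nat) (rho sigma omega : E -> bool) (f : E -> R) :
  (0 < q)%N ->
  totally_cyclic t h rho -> totally_cyclic t h sigma -> totally_cyclic t h omega ->
  eulerian_equiv t h rho sigma -> eulerian_equiv t h rho omega ->
  DeltaFL t h q rho eps f ->
  [/\ orient_of eps f = rho,
      (forall g : E -> R,
         DeltaFL t h q sigma eps g <->
         exists f' : E -> R, DeltaFL t h q rho eps f' /\
           g = Pmap eps sigma (Qmap q sigma rho (Pmap rho eps f'))),
      (Pmap eps sigma (Qmap q sigma rho (Pmap rho eps f)) =
         Pmap eps omega (Qmap q omega rho (Pmap rho eps f)) <-> sigma = omega) &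
      (forall g : E -> R,
         (qflow t h eps q g /\ modq_eq q f g) <->
         exists alpha : E -> bool, eulerian_equiv t h alpha rho /\
           g = Pmap eps alpha (Qmap q alpha rho (Pmap rho eps f)))].
Proof.
move=> q_gt0 _ _ _ Hrs _ HfD; have [Hf Hbox] := HfD.
split.
- by apply: orient_of_pos => e; case: (Hbox e).
- move=> g; split=> [HgD|[f' [Hf'D ->]]].
    exists (transfer q eps rho sigma g); split; first exact: DeltaFL_transfer.
    by rewrite -[RHS]/(transfer q eps sigma rho _) transferK.
  exact: DeltaFL_transfer (eulerian_equiv_sym Hrs) Hf'D.
- by split=> [|-> //]; apply: transfer_inj_orient.
- move=> g; split=> [[[Hg Hgq] Hmod]|[alpha [Har ->]]]; last exact: transfer_qflow_modq.
  set alpha := fun e => if g e == f e then rho e else ~~ rho e.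
  have gE : g = transfer q eps alpha rho f := modq_eq_transfer Hbox Hgq Hmod.
  exists alpha; split; last exact: gE.
  by apply/(is_flow_transfer alpha rho q_gt0 Hf); rewrite -gE.
Qed.
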